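(* Let $\alpha\in(0,1)$, let $p_X$ be a distribution on a finite set $\mathcal X$ and $p_{Y\mid X}$ a channel to a finite set $\mathcal Y$. Let $\tilde q^{(0)}_{X,Y}$ be an initial joint distribution on $\mathcal X\times\mathcal Y$ and for $k\ge0$ define $q_Y^{(k)}(y)=\sum_x\tilde q^{(k)}_{X,Y}(x,y)$ and $\tilde q^{(k+1)}_{X,Y}(x,y)=\bar q_X(x)\bar q_{Y\mid X}(y\mid x)$ where $$\bar q_X(x)=\frac{p_X(x)\big(\sum_yp_{Y\mid X}(y\mid x)^\alpha q^{(k)}_Y(y)^{1-\alpha}\big)^{1/\alpha}}{\sum_{x'}p_X(x')\big(\sum_yp_{Y\mid X}(y\mid x')^\alpha q^{(k)}_Y(y)^{1-\alpha}\big)^{1/\alpha}},\qquad \bar q_{Y\mid X}(y\mid x)=\frac{p_{Y\mid X}(y\mid x)^\alpha q^{(k)}_Y(y)^{1-\alpha}}{\sum_{y'}p_{Y\mid X}(y'\mid x)^\alpha q^{(k)}_Y(y')^{1-\alpha}}.$$ Then $$F_\alpha^{\mathrm{LP}}(\tilde q^{(0)}_{X,Y},q_Y^{(0)})\ge F_\alpha^{\mathrm{LP}}(\tilde q^{(1)}_{X,Y},q_Y^{(0)})\ge\cdots\ge F_\alpha^{\mathrm{LP}}(\tilde q^{(k)}_{X,Y},q_Y^{(k)})\ge F_\alpha^{\mathrm{LP}}(\tilde q^{(k+1)}_{X,Y},q_Y^{(k)})\ge\cdots\ge I_\alpha^{\mathrm{LP}}(X;Y).$$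
   Context: $\log$ is natural and $D$ is the Kullback–Leibler divergence. For a joint distribution $\tilde q_{X,Y}=\tilde q_X\tilde q_{Y\mid X}$ and a distribution $q_Y$ on $\mathcal Y$, $F_\alpha^{\mathrm{LP}}(\tilde q_{X,Y},q_Y):=\frac{\alpha}{1-\alpha}D(\tilde q_{X,Y}\|\tilde q_Xp_{Y\mid X})+D(\tilde q_X\tilde q_{Y\mid X}\|\tilde q_Xq_Y)+\frac{\alpha}{1-\alpha}D(\tilde q_X\|p_X)$. The Lapidoth–Pfister mutual information is $I_\alpha^{\mathrm{LP}}(X;Y):=\min_{q_X}\min_{q_Y}D_\alpha(p_Xp_{Y\mid X}\|q_Xq_Y)$ with $D_\alpha(p\|q):=\frac{1}{\alpha-1}\log\sum_zp(z)^\alpha q(z)^{1-\alpha}$. *)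

From HB Require Import structures.
From mathcomp Require Import all_boot all_order all_algebra.
From mathcomp Require Import all_classical all_reals all_analysis.
Set Implicit Arguments. Unset Strict Implicit. Unset Printing Implicit Defensive.
Import Order.TTheory GRing.Theory Num.Theory.
Local Open Scope ring_scope.
Local Open Scope classical_set_scope.

Section LP.
Variable R : realType.

Definition is_dist (T : finType) (p : T -> R) : Prop :=
  (forall t, 0 <= p t) /\ \sum_(t : T) p t = 1.

Definition is_channel (X Y : finType) (W : X -> Y -> R) : Prop :=
  forall x, is_dist (W x).

Definition kl_term (a b : R) : \bar R :=
  if a == 0 then 0%E else if b == 0 then +oo%E else (a * ln (a / b))%:E.

Definition KL (T : finType) (p q : T -> R) : \bar R :=
  (\sum_(t : T) kl_term (p t) (q t))%E.

(* Renyi divergence D_alpha(p||q) = 1/(alpha-1) log sum p^alpha q^(1-alpha),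
   written for alpha in (0,1): when the sum is 0, log 0 = -oo and the
   value is +oo. *)
Definition renyi (alpha : R) (T : finType) (p q : T -> R) : \bar R :=
  let s := \sum_(t : T) p t `^ alpha * q t `^ (1 - alpha) in
  if s == 0 then +oo%E else ((alpha - 1)^-1 * ln s)%:E.

Variables X Y : finType.

Definition margX (q : X * Y -> R) (x : X) : R := \sum_(y : Y) q (x, y).
Definition margY (q : X * Y -> R) (y : Y) : R := \sum_(x : X) q (x, y).

Definition F_LP (alpha : R) (pX : X -> R) (W : X -> Y -> R)
    (qt : X * Y -> R) (qY : Y -> R) : \bar R :=
  ((alpha / (1 - alpha))%:E * KL qt (fun z => (margX qt z.1 * W z.1 z.2)%R)
   + KL qt (fun z => (margX qt z.1 * qY z.2)%R)
   + (alpha / (1 - alpha))%:E * KL (margX qt) pX)%E.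

(* I_alpha^LP(X;Y) = min_{q_X} min_{q_Y} D_alpha(p_X p_{Y|X} || q_X q_Y),
   written as an infimum (the minimum is attained). *)
Definition I_LP (alpha : R) (pX : X -> R) (W : X -> Y -> R) : \bar R :=
  ereal_inf [set e | exists (qX : X -> R) (qY : Y -> R),
    is_dist qX /\ is_dist qY /\
    e = renyi alpha (fun z : X * Y => pX z.1 * W z.1 z.2)
                    (fun z : X * Y => qX z.1 * qY z.2)].

Definition Zx (alpha : R) (W : X -> Y -> R) (qY : Y -> R) (x : X) : R :=
  \sum_(y : Y) W x y `^ alpha * qY y `^ (1 - alpha).

Definition normX (alpha : R) (pX : X -> R) (W : X -> Y -> R) (qY : Y -> R) : R :=
  \sum_(x' : X) pX x' * Zx alpha W qY x' `^ alpha^-1.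

Definition barqX (alpha : R) (pX : X -> R) (W : X -> Y -> R) (qY : Y -> R)
    (x : X) : R :=
  pX x * Zx alpha W qY x `^ alpha^-1 / normX alpha pX W qY.

Definition barqYX (alpha : R) (W : X -> Y -> R) (qY : Y -> R) (x : X) (y : Y) : R :=
  W x y `^ alpha * qY y `^ (1 - alpha) / Zx alpha W qY x.

Definition lp_step (alpha : R) (pX : X -> R) (W : X -> Y -> R) (qY : Y -> R)
    (z : X * Y) : R :=
  barqX alpha pX W qY z.1 * barqYX alpha W qY z.1 z.2.

Fixpoint lp_iter (alpha : R) (pX : X -> R) (W : X -> Y -> R)
    (q0 : X * Y -> R) (k : nat) : X * Y -> R :=
  match k with
  | 0 => q0
  | k'.+1 => lp_step alpha pX W (margY (lp_iter alpha pX W q0 k'))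
  end.

End LP.

(* Up to the factor [1 - alpha], F^LP(r, q) is the unnormalised divergence of r
   from the geometric mixture m = (p_X p_{Y|X})^alpha (r_X q)^(1 - alpha).
   Gibbs' inequality bounds it below by
   -log(sum m) = (1 - alpha) D_alpha(p_X p_{Y|X} || r_X q), hence by (1 - alpha) I^LP.  Marginalising onto X (log-sum inequality) and applying
   Gibbs once more gives the lower bound -alpha log N(q), where N(q) is the normaliser
   of bar q_X, and this bound is attained by the update bar q_X bar q_{Y|X}.  Finally,
   q enters F^LP(r, q) only through D(r || r_X q) = D(r || r_X r_Y) + D(r_Y || q),
   which is minimised by q = r_Y. *)

From HB Require Import structures.
From mathcomp Require Import all_boot all_order all_algebra.
From mathcomp Require Import all_classical all_reals all_analysis.
From mathcomp Require Import ring lra.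
Set Implicit Arguments.
Unset Strict Implicit.
Unset Printing Implicit Defensive.
Import Order.TTheory GRing.Theory Num.Theory.
Local Open Scope ring_scope.

Section LogSum.
Context {R : realType} {T : finType}.
Implicit Types a b : T -> R.

Definition abs_cont a b : bool := [forall t, (a t != 0) ==> (b t != 0)].

Lemma KLE a b :
  KL a b = if abs_cont a b then (\sum_t a t * ln (a t / b t))%:E else +oo%E.
Proof.
rewrite /KL /kl_term; case: ifP => [/forallP ac | /negbT].
  rewrite -sumEFin; apply: eq_bigr => t _.
  have [-> | at0] := eqVneq (a t) 0; first by rewrite mul0r.
  by rewrite (negbTE (implyP (ac t) at0)).
rewrite negb_forall => /existsP [t]; rewrite negb_imply negbK => /andP [at0 bt0].
rewrite (bigD1 t) //= (negbTE at0) bt0 addye //.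
apply: (big_ind (fun e => e != -oo%E)) => // [x y|i _].
  by case: x => [x||] //; case: y.
by case: ifP => //; case: ifP.
Qed.

Lemma abs_cont_sum_gt0 a b : (forall t, 0 <= a t) -> (forall t, 0 <= b t) ->
  abs_cont a b -> \sum_t a t != 0 -> 0 < \sum_t b t.
Proof.
move=> a0 b0 /forallP ac An.
have [t /andP [_ at_gt0]] := psumr_neq0P (fun t _ => a0 t) (elimN eqP An).
apply: (@lt_le_trans _ _ (b t)); first by rewrite lt0r b0 andbT (implyP (ac t)) // gt_eqF.
by rewrite (bigD1 t) //= lerDl sumr_ge0.
Qed.

Lemma log_sum_inequality a b : (forall t, 0 <= a t) -> (forall t, 0 <= b t) ->
  abs_cont a b ->
  (\sum_t a t) * ln ((\sum_t a t) / \sum_t b t) <= \sum_t a t * ln (a t / b t).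
Proof.
move=> a0 b0 ac; set A := \sum_t a t; set B := \sum_t b t.
have [A0 | An] := eqVneq A 0.
  by rewrite A0 mul0r big1 // => t _; rewrite (psumr_eq0P (fun t _ => a0 t) A0) ?mul0r.
have A_gt0 : 0 < A by rewrite lt0r An sumr_ge0.
have B_gt0 : 0 < B by exact: abs_cont_sum_gt0.
(* [ln x <= x - 1] at [x = b t A / (a t B)] *)
have tangent t : a t * ln (A / B) + a t - b t * (A / B) <= a t * ln (a t / b t).
  have [-> | at0] := eqVneq (a t) 0.
    by rewrite !mul0r add0r sub0r oppr_le0 mulr_ge0 ?divr_ge0 ?b0 ?ltW.
  have at_gt0 : 0 < a t by rewrite lt0r at0 a0.
  have bt_gt0 : 0 < b t by rewrite lt0r b0 andbT (implyP (forallP ac t)).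
  set x := b t * (A / B) / a t.
  have x_gt0 : 0 < x by rewrite divr_gt0 ?mulr_gt0 ?divr_gt0 ?invr_gt0.
  have : ln x <= x - 1.
    by have := @le_ln1Dx _ (x - 1); rewrite [1 + _]addrC subrK; apply; lra.
  move=> /(ler_wpM2l (ltW at_gt0)).
  rewrite mulrBr /x [a t * (_ / a t)]mulrC divfK ?gt_eqF //.
  rewrite !ln_div ?lnM ?posrE ?mulr_gt0 ?divr_gt0 ?invr_gt0 //.
  rewrite ?lnV ?posrE // !(mulrDr, mulrN) mulr1; lra.
apply: le_trans (ler_sum _ (fun t _ => tangent t)).
rewrite !big_split /= sumrN -!mulr_suml -/A -/B [B * _]mulrC divfK ?gt_eqF //.
by rewrite addrK.
Qed.

Lemma gibbs_inequality a b : is_dist a -> (forall t, 0 <= b t) -> abs_cont a b ->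
  - ln (\sum_t b t) <= \sum_t a t * ln (a t / b t).
Proof.
move=> [a0 a1] b0 ac.
have B_gt0 : 0 < \sum_t b t by apply: (abs_cont_sum_gt0 a0 b0 ac); rewrite a1 oner_neq0.
by have := log_sum_inequality a0 b0 ac; rewrite a1 mul1r div1r lnV.
Qed.

End LogSum.

Section Marginals.
Context {R : realType} {X Y : finType}.
Implicit Types r m : X * Y -> R.

Lemma sum_pairE (F : X * Y -> R) : \sum_z F z = \sum_x \sum_y F (x, y).
Proof. by rewrite pair_bigA; apply: eq_bigr => -[]. Qed.

Lemma sum_margX r (f : X -> R) : \sum_z r z * f z.1 = \sum_x margX r x * f x.
Proof. by rewrite sum_pairE; apply: eq_bigr => x _; rewrite mulr_suml. Qed.

Lemma sum_margY r (f : Y -> R) : \sum_z r z * f z.2 = \sum_y margY r y * f y.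
Proof.
by rewrite sum_pairE exchange_big; apply: eq_bigr => y _; rewrite mulr_suml.
Qed.

Lemma margX_dist r : is_dist r -> is_dist (margX r).
Proof.
move=> [r0 r1]; split=> [x|]; first exact: sumr_ge0.
by rewrite -r1 sum_pairE.
Qed.

Lemma margY_dist r : is_dist r -> is_dist (margY r).
Proof.
move=> [r0 r1]; split=> [y|]; first exact: sumr_ge0.
by rewrite -r1 sum_pairE exchange_big.
Qed.

Lemma le_margX r z : (forall z, 0 <= r z) -> r z <= margX r z.1.
Proof. by case: z => x y r0; rewrite /margX (bigD1 y) //= lerDl sumr_ge0. Qed.

Lemma le_margY r z : (forall z, 0 <= r z) -> r z <= margY r z.2.
Proof. by case: z => x y r0; rewrite /margY (bigD1 x) //= lerDl sumr_ge0. Qed.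

Lemma log_sum_margX r m : (forall z, 0 <= r z) -> (forall z, 0 <= m z) ->
  abs_cont r m ->
  \sum_x margX r x * ln (margX r x / margX m x) <= \sum_z r z * ln (r z / m z).
Proof.
move=> r0 m0 /forallP rm; rewrite sum_pairE; apply: ler_sum => x _.
by apply: log_sum_inequality => //; apply/forallP => y; exact: rm.
Qed.

Lemma KL_prod_margY r (q : Y -> R) : (forall z, 0 <= r z) -> (forall y, 0 <= q y) ->
  abs_cont r (fun z => margX r z.1 * q z.2) ->
  \sum_z r z * ln (r z / (margX r z.1 * q z.2)) =
  \sum_z r z * ln (r z / (margX r z.1 * margY r z.2))
  + \sum_y margY r y * ln (margY r y / q y).
Proof.
move=> r0 q0 /forallP rq; rewrite -sum_margY -big_split; apply: eq_bigr => z _ /=.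
have [-> | rz] := eqVneq (r z) 0; first by rewrite !mul0r addr0.
have rz_gt0 : 0 < r z by rewrite lt0r rz r0.
have [uz qz] : margX r z.1 != 0 /\ q z.2 != 0.
  by apply/andP; rewrite -negb_or -mulf_eq0 (implyP (rq z)).
have uz_gt0 : 0 < margX r z.1 := lt_le_trans rz_gt0 (le_margX z r0).
have vz_gt0 : 0 < margY r z.2 := lt_le_trans rz_gt0 (le_margY z r0).
have qz_gt0 : 0 < q z.2 by rewrite lt0r qz q0.
by rewrite !ln_div ?lnM ?posrE ?mulr_gt0 //; ring.
Qed.

End Marginals.

Section LapidothPfister.
Variables (R : realType) (X Y : finType) (alpha : R) (pX : X -> R) (W : X -> Y -> R).
Hypotheses (alpha01 : 0 < alpha < 1) (pX_dist : is_dist pX) (W_channel : is_channel W).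
Implicit Types (r : X * Y -> R) (q : Y -> R).

Let alpha_gt0 : 0 < alpha. Proof. by case/andP: alpha01. Qed.
Let alpha_lt1 : 0 < 1 - alpha. Proof. by case/andP: alpha01 => _; rewrite subr_gt0. Qed.
Let pX_ge0 x : 0 <= pX x. Proof. by case: pX_dist. Qed.
Let W_ge0 x y : 0 <= W x y. Proof. by case: (W_channel x). Qed.

Definition F_LP_dom r q : bool :=
  [&& abs_cont r (fun z => margX r z.1 * W z.1 z.2),
      abs_cont r (fun z => margX r z.1 * q z.2) & abs_cont (margX r) pX].

Definition F_LP_fin r q : R :=
  alpha / (1 - alpha) * \sum_z r z * ln (r z / (margX r z.1 * W z.1 z.2))
  + \sum_z r z * ln (r z / (margX r z.1 * q z.2))
  + alpha / (1 - alpha) * \sum_x margX r x * ln (margX r x / pX x).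

Lemma F_LPE r q :
  F_LP alpha pX W r q = if F_LP_dom r q then (F_LP_fin r q)%:E else +oo%E.
Proof.
have c_gt0 : (0 < (alpha / (1 - alpha))%:E)%E by rewrite lte_fin divr_gt0.
rewrite /F_LP /F_LP_dom !KLE.
by case: ifP; case: ifP; case: ifP; rewrite /= ?gt0_muley ?addye ?addey.
Qed.

Lemma F_LP_dom_supp r q z : (forall z, 0 <= r z) -> (forall y, 0 <= q y) ->
  F_LP_dom r q -> r z != 0 ->
  [/\ 0 < margX r z.1, 0 < pX z.1, 0 < W z.1 z.2 & 0 < q z.2].
Proof.
move=> r0 q0 /and3P [/forallP dW /forallP dq /forallP dp] rz.
have /andP [uz wz] : (margX r z.1 != 0) && (W z.1 z.2 != 0).
  by rewrite -negb_or -mulf_eq0 (implyP (dW z)).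
have /andP [_ qz] : (margX r z.1 != 0) && (q z.2 != 0).
  by rewrite -negb_or -mulf_eq0 (implyP (dq z)).
have pz := implyP (dp z.1) uz.
by split; rewrite lt0r ?uz ?pz ?wz ?qz ?pX_ge0 ?W_ge0 ?q0 //; exact: sumr_ge0.
Qed.

Definition lp_geomix r q (z : X * Y) : R :=
  (pX z.1 * W z.1 z.2) `^ alpha * (margX r z.1 * q z.2) `^ (1 - alpha).

Lemma lp_geomix_ge0 r q z : 0 <= lp_geomix r q z.
Proof. by rewrite mulr_ge0 ?powR_ge0. Qed.

Lemma abs_cont_lp_geomix r q : (forall z, 0 <= r z) -> (forall y, 0 <= q y) ->
  F_LP_dom r q -> abs_cont r (lp_geomix r q).
Proof.
move=> r0 q0 dom; apply/forallP => z; apply/implyP => rz.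
have [uz pz wz qz] := F_LP_dom_supp r0 q0 dom rz.
by rewrite gt_eqF // mulr_gt0 ?powR_gt0 ?mulr_gt0.
Qed.

Lemma F_LP_fin_geomix r q : (forall z, 0 <= r z) -> (forall y, 0 <= q y) ->
  F_LP_dom r q ->
  (1 - alpha) * F_LP_fin r q = \sum_z r z * ln (r z / lp_geomix r q z).
Proof.
move=> r0 q0 dom.
rewrite /F_LP_fin -(sum_margX r (fun x => ln (margX r x / pX x))).
set c := alpha / (1 - alpha).
have cE : (1 - alpha) * c = alpha by rewrite mulrCA divff ?mulr1 // gt_eqF.
rewrite !mulrDr ![(1 - alpha) * (c * _)]mulrA cE !mulr_sumr -!big_split /=.
apply: eq_bigr => z _.
have [-> | rz] := eqVneq (r z) 0; first by rewrite !(mul0r, mulr0, addr0).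
have [uz pz wz qz] := F_LP_dom_supp r0 q0 dom rz.
have rz_gt0 : 0 < r z by rewrite lt0r rz r0.
rewrite /lp_geomix !ln_div ?lnM ?posrE ?mulr_gt0 ?powR_gt0 ?mulr_gt0 //.
by rewrite !ln_powR !lnM ?posrE //; ring.
Qed.

Lemma I_LP_le_F_LP r q : is_dist r -> is_dist q ->
  (I_LP alpha pX W <= F_LP alpha pX W r q)%E.
Proof.
move=> rd qd; have [r0 r1] := rd; have [q0 _] := qd.
rewrite F_LPE; case: ifP => dom; last exact: leey.
have rm := abs_cont_lp_geomix r0 q0 dom.
have S_gt0 : 0 < \sum_z lp_geomix r q z.
  by apply: (abs_cont_sum_gt0 r0 (lp_geomix_ge0 r q) rm); rewrite r1 oner_neq0.
have renyiE : renyi alpha (fun z => pX z.1 * W z.1 z.2) (fun z => margX r z.1 * q z.2) =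
    ((alpha - 1)^-1 * ln (\sum_z lp_geomix r q z))%:E.
  by rewrite /renyi /= (gt_eqF S_gt0).
apply: le_trans (ereal_inf_lbound _) _.
  by exists (margX r), q; split; [exact: margX_dist | split].
rewrite renyiE lee_fin -(ler_pM2l alpha_lt1) F_LP_fin_geomix //.
have -> : (1 - alpha) * ((alpha - 1)^-1 * ln (\sum_z lp_geomix r q z)) =
    - ln (\sum_z lp_geomix r q z).
  by field; rewrite subr_eq0 lt_eqF // -subr_gt0.
exact: gibbs_inequality rd (lp_geomix_ge0 r q) rm.
Qed.

Lemma F_LP_margY_le r q : is_dist r -> is_dist q ->
  (F_LP alpha pX W r (margY r) <= F_LP alpha pX W r q)%E.
Proof.
move=> rd [q0 q1]; have [r0 _] := rd.
rewrite (F_LPE r q); case: ifP => dom; last exact: leey.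
have /and3P [dW dq dp] := dom.
have domY : F_LP_dom r (margY r).
  rewrite /F_LP_dom dW dp andbT /=; apply/forallP => z; apply/implyP => rz.
  have rz_gt0 : 0 < r z by rewrite lt0r rz r0.
  rewrite mulf_neq0 // gt_eqF // (lt_le_trans rz_gt0) //.
    exact: le_margX.
  exact: le_margY.
rewrite F_LPE domY lee_fin /F_LP_fin lerD2r lerD2l (KL_prod_margY r0 q0 dq) lerDl.
have := gibbs_inequality (margY_dist rd) q0; rewrite q1 ln1 oppr0; apply.
apply/forallP => y; apply/implyP => vy.
have [x /andP [_ rxy]] := psumr_neq0P (fun x _ => r0 (x, y)) (elimN eqP vy).
by have := implyP (forallP dq (x, y)) (lt0r_neq0 rxy); rewrite mulf_eq0 negb_or => /andP [].
Qed.

Lemma Zx_ge0 q x : 0 <= Zx alpha W q x.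
Proof. by apply: sumr_ge0 => y _; rewrite mulr_ge0 ?powR_ge0. Qed.

Lemma Zx_gt0 q x y : 0 < W x y -> 0 < q y -> 0 < Zx alpha W q x.
Proof.
move=> wp qp; apply: (@lt_le_trans _ _ (W x y `^ alpha * q y `^ (1 - alpha))).
  by rewrite mulr_gt0 ?powR_gt0.
rewrite /Zx (bigD1 y) //= lerDl; apply: sumr_ge0 => i _.
by rewrite mulr_ge0 ?powR_ge0.
Qed.

Lemma margX_lp_geomix r q x : (forall z, 0 <= r z) -> (forall y, 0 <= q y) ->
  margX (lp_geomix r q) x = pX x `^ alpha * margX r x `^ (1 - alpha) * Zx alpha W q x.
Proof.
move=> r0 q0; rewrite /Zx mulr_sumr; apply: eq_bigr => y _.
by rewrite /lp_geomix /= !powRM ?pX_ge0 ?W_ge0 ?q0 ?sumr_ge0 //; ring.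
Qed.

Lemma F_LP_fin_ge_normX r q : is_dist r -> (forall y, 0 <= q y) -> F_LP_dom r q ->
  - alpha * ln (normX alpha pX W q) <= (1 - alpha) * F_LP_fin r q.
Proof.
move=> rd q0 dom; have [r0 _] := rd.
rewrite F_LP_fin_geomix //.
apply: le_trans (log_sum_margX r0 (lp_geomix_ge0 r q) (abs_cont_lp_geomix r0 q0 dom)).
pose d x := pX x * Zx alpha W q x `^ alpha^-1.
have supp x : margX r x != 0 -> [/\ 0 < margX r x, 0 < pX x & 0 < Zx alpha W q x].
  move=> ux; have [y /andP [_ rxy]] := psumr_neq0P (fun y _ => r0 (x, y)) (elimN eqP ux).
  have [uz pz wz qz] := F_LP_dom_supp r0 q0 dom (lt0r_neq0 rxy).
  by split=> //; exact: Zx_gt0 wz qz.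
have marg_d x : margX r x * ln (margX r x / margX (lp_geomix r q) x) =
    alpha * (margX r x * ln (margX r x / d x)).
  have [-> | ux] := eqVneq (margX r x) 0; first by rewrite !mul0r mulr0.
  have [u_gt0 p_gt0 Z_gt0] := supp x ux.
  rewrite margX_lp_geomix // /d !ln_div ?lnM ?posrE ?mulr_gt0 ?powR_gt0 ?mulr_gt0 //.
  by rewrite !ln_powR; field; rewrite gt_eqF.
under eq_bigr do rewrite marg_d.
rewrite -mulr_sumr mulNr -mulrN ler_pM2l //.
apply: gibbs_inequality (margX_dist rd) _ _ => [x | ].
  by rewrite mulr_ge0 ?powR_ge0.
apply/forallP => x; apply/implyP => ux; have [_ p_gt0 Z_gt0] := supp x ux.
by rewrite gt_eqF // mulr_gt0 ?powR_gt0.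
Qed.

Section Step.
Variable q : Y -> R.
Hypotheses (q_ge0 : forall y, 0 <= q y) (normX_neq0 : normX alpha pX W q != 0).
Local Notation s := (lp_step alpha pX W q).

Let normX_gt0 : 0 < normX alpha pX W q.
Proof. by rewrite lt0r normX_neq0 sumr_ge0 // => x _; rewrite mulr_ge0 ?powR_ge0. Qed.

Lemma barqX_gt0 x : 0 < pX x -> 0 < Zx alpha W q x -> 0 < barqX alpha pX W q x.
Proof. by move=> px Zx; rewrite divr_gt0 ?mulr_gt0 ?powR_gt0. Qed.

Lemma margX_lp_step x : margX s x = barqX alpha pX W q x.
Proof.
rewrite /margX /lp_step /= -mulr_sumr.
have [Z0 | Zn] := eqVneq (Zx alpha W q x) 0.
  by rewrite /barqX Z0 powR0 ?invr_eq0 ?gt_eqF // mulr0 !mul0r.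
by rewrite /barqYX -mulr_suml divff // mulr1.
Qed.

Lemma lp_step_dist : is_dist s.
Proof.
split=> [z | ].
  by rewrite mulr_ge0 // divr_ge0 ?mulr_ge0 ?powR_ge0 ?pX_ge0 ?Zx_ge0 // ltW.
rewrite sum_pairE; under eq_bigr => x _ do rewrite -/(margX s x) margX_lp_step.
by rewrite /barqX -mulr_suml divff.
Qed.

Lemma lp_step_supp z : s z != 0 ->
  [/\ 0 < pX z.1, 0 < Zx alpha W q z.1, 0 < W z.1 z.2 & 0 < q z.2].
Proof.
have a0 : alpha != 0 by rewrite gt_eqF.
have a1 : 1 - alpha != 0 by rewrite gt_eqF.
have ai : alpha^-1 != 0 by rewrite invr_eq0.
move=> sz; split; rewrite lt0r ?pX_ge0 ?Zx_ge0 ?W_ge0 ?q_ge0 andbT;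
  apply: contraNneq sz => E;
  by rewrite /lp_step /barqX /barqYX E ?powR0 // !(mul0r, mulr0).
Qed.

Lemma lp_step_dom : F_LP_dom s q.
Proof.
apply/and3P; split; apply/forallP.
- move=> z; apply/implyP => /lp_step_supp [pz Zz wz qz].
  by rewrite margX_lp_step mulf_neq0 ?gt_eqF ?barqX_gt0.
- move=> z; apply/implyP => /lp_step_supp [pz Zz wz qz].
  by rewrite margX_lp_step mulf_neq0 ?gt_eqF ?barqX_gt0.
- move=> x; apply/implyP.
  by rewrite margX_lp_step /barqX !mulf_eq0 !negb_or => /andP [/andP []].
Qed.

Lemma F_LP_fin_lp_step : (1 - alpha) * F_LP_fin s q = - alpha * ln (normX alpha pX W q).
Proof.
have [s0 s1] := lp_step_dist.
rewrite F_LP_fin_geomix // ?lp_step_dom //.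
rewrite -[RHS]mul1r -s1 mulr_suml; apply: eq_bigr => z _.
have [-> | sz] := eqVneq (s z) 0; first by rewrite !mul0r.
have [pz Zz wz qz] := lp_step_supp sz.
have u_gt0 := barqX_gt0 pz Zz.
have lnu : ln (barqX alpha pX W q z.1) =
    ln (pX z.1) + alpha^-1 * ln (Zx alpha W q z.1) - ln (normX alpha pX W q).
  by rewrite /barqX ln_div ?lnM ?posrE ?mulr_gt0 ?powR_gt0 // ?ln_powR.
congr (_ * _); rewrite /lp_geomix margX_lp_step /lp_step /barqYX.
move: (barqX alpha pX W q z.1) u_gt0 lnu => u u_gt0 lnu.
have b_gt0 : 0 < W z.1 z.2 `^ alpha * q z.2 `^ (1 - alpha) by rewrite mulr_gt0 ?powR_gt0.
rewrite ln_div ?lnM ?ln_div ?posrE ?mulr_gt0 ?divr_gt0 ?invr_gt0 ?powR_gt0 ?mulr_gt0 //.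
rewrite lnV ?posrE // !ln_powR !lnM ?posrE // lnu.
by field; rewrite gt_eqF.
Qed.

End Step.

Lemma F_LP_lp_step_le r q : is_dist r -> (forall y, 0 <= q y) ->
  normX alpha pX W q != 0 ->
  (F_LP alpha pX W (lp_step alpha pX W q) q <= F_LP alpha pX W r q)%E.
Proof.
move=> rd q0 N0; rewrite !F_LPE lp_step_dom //; case: ifP => dom; last exact: leey.
by rewrite lee_fin -(ler_pM2l alpha_lt1) F_LP_fin_lp_step //; exact: F_LP_fin_ge_normX.
Qed.

Lemma lp_iter_dist (init : X * Y -> R) : is_dist init ->
  (forall k, normX alpha pX W (margY (lp_iter alpha pX W init k)) != 0) ->
  forall k, is_dist (lp_iter alpha pX W init k).
Proof.
by move=> initd N0; elim=> [//|k _]; exact: lp_step_dist (N0 k).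
Qed.

End LapidothPfister.

Theorem lemma5 (R : realType) (X Y : finType) (alpha : R)
  (pX : X -> R) (W : X -> Y -> R) (q0 : X * Y -> R) :
  0 < alpha < 1 ->
  is_dist pX -> is_channel W -> is_dist q0 ->
  (* the iteration is well defined: the normalizer of bar q_X is nonzero *)
  (forall k : nat, normX alpha pX W (margY (lp_iter alpha pX W q0 k)) != 0) ->
  forall k : nat,
    let qk := lp_iter alpha pX W q0 k in
    let qk1 := lp_iter alpha pX W q0 k.+1 in
    (F_LP alpha pX W qk (margY qk) >= F_LP alpha pX W qk1 (margY qk))%E /\
    (F_LP alpha pX W qk1 (margY qk) >= F_LP alpha pX W qk1 (margY qk1))%E /\
    (F_LP alpha pX W qk (margY qk) >= I_LP alpha pX W)%E /\
    (F_LP alpha pX W qk1 (margY qk) >= I_LP alpha pX W)%E.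
Proof.
move=> alpha01 pXd Wc q0d N0 k qk qk1.
have dist j : is_dist (lp_iter alpha pX W q0 j) by apply: lp_iter_dist.
have qYd : is_dist (margY qk) := margY_dist (dist k).
split; last split; last split.
- by apply: F_LP_lp_step_le => //; [exact: dist | case: qYd].
- exact: F_LP_margY_le (dist k.+1) qYd.
- exact: I_LP_le_F_LP (dist k) qYd.
- exact: I_LP_le_F_LP (dist k.+1) qYd.
Qed.
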